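(* Over strict timed traces, every metric formula is MHT-equivalent to a metric formula in unary normal form.
   Context: Metric formulas over $\mathcal{A}$: $\varphi ::= p \mid \bot \mid \varphi_1\otimes\varphi_2 \mid \bullet_I\varphi \mid \varphi_1\,\mathsf{S}_I\,\varphi_2 \mid \varphi_1\,\mathsf{T}_I\,\varphi_2 \mid \bigcirc_I\varphi \mid \varphi_1\,\mathsf{U}_I\,\varphi_2 \mid \varphi_1\,\mathsf{R}_I\,\varphi_2$, $\otimes\in\{\to,\wedge,\vee\}$, $I=[m,n)$, $m\in\mathbb{N}$, $n\in\mathbb{N}\cup\{\omega\}$; omitted subscript means $[0,\omega)$. Derived unary operators: $\blacksquare_I\varphi=\bot\,\mathsf{T}_I\,\varphi$, eventually before $\top\,\mathsf{S}_I\,\varphi$, $\widehat{\bullet}_I\varphi=\bullet_I\varphi\vee\neg\bullet_I\top$, $\Box_I\varphi=\bot\,\mathsf{R}_I\,\varphi$, $\Diamond_I\varphi=\top\,\mathsf{U}_I\,\varphi$, $\widehat{\bigcirc}_I\varphi=\bigcirc_I\varphi\vee\neg\bigcirc_I\top$ (with $\neg\varphi=\varphi\to\bot$, $\top=\neg\bot$). A metric formula is in unary normal form if intervals only affect unary temporal operators ($\bigcirc_I,\widehat{\bigcirc}_I,\Diamond_I,\Box_I,\bullet_I,\widehat{\bullet}_I,\blacksquare_I$, eventually before), while the binary operators $\mathsf{U},\mathsf{R},\mathsf{S},\mathsf{T}$ occur only with interval $[0,\omega)$ (no attached interval). Timed HT-trace $\mathbf{M}=(\langle\mathbf{H},\mathbf{T}\rangle,\tau)$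 of length $\lambda$: $H_i\subseteq T_i\subseteq\mathcal{A}$, $\tau:[0,\lambda)\to\mathbb{N}$, $\tau(0)=0$; strict means $\tau(i)<\tau(i+1)$ whenever $i+1<\lambda$. Satisfaction at $k$: $\bot$ never; $p$ iff $p\in H_k$; $\wedge,\vee$ usual; $\varphi\to\psi$ iff for both $\mathbf{M}'=\mathbf{M}$ and $\mathbf{M}'=(\langle\mathbf{T},\mathbf{T}\rangle,\tau)$, $\mathbf{M}',k\not\models\varphi$ or $\mathbf{M}',k\models\psi$; $\bullet_I\varphi$: $k>0$, $\varphi$ at $k-1$, $\tau(k)-\tau(k-1)\in I$; $\varphi\,\mathsf{S}_I\,\psi$: some $j\in[0,k]$ with $\tau(k)-\tau(j)\in I$, $\psi$ at $j$, $\varphi$ at all $i\in(j,k]$; $\varphi\,\mathsf{T}_I\,\psi$: for all such $j$, $\psi$ at $j$ or $\varphi$ at some $i\in(j,k]$; $\bigcirc_I\varphi$: $k+1<\lambda$, $\varphi$ at $k+1$, $\tau(k+1)-\tau(k)\in I$; $\varphi\,\mathsf{U}_I\,\psi$: some $j\in[k,\lambda)$ with $\tau(j)-\tau(k)\in I$, $\psi$ at $j$, $\varphi$ at all $i\in[k,j)$; $\varphi\,\mathsf{R}_I\,\psi$: for all such $j$, $\psi$ at $j$ or $\varphi$ at some $i\in[k,j)$. Equivalence means $\mathbf{M},k\models\varphi\leftrightarrow\psi$ for all strict timed HT-traces and all $k$. *)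

From Stdlib Require Import Arith Lia.
Set Implicit Arguments.

(* ℕ ∪ {ω}: None = ω *)
Definition natw := option nat.
Definition ltw (k : nat) (n : natw) : Prop :=
  match n with Some n => k < n | None => True end.

Record interval := Itv { lo : nat; hi : natw }.
Definition in_itv (d : nat) (J : interval) : Prop := lo J <= d /\ ltw d (hi J).
Definition full : interval := Itv 0 None.

Inductive formula (A : Type) : Type :=
| Atom : A -> formula A
| Bot : formula A
| Impl : formula A -> formula A -> formula A
| And : formula A -> formula A -> formula A
| Or : formula A -> formula A -> formula A
| Prev : interval -> formula A -> formula A
| Since : interval -> formula A -> formula A -> formula A
| Trigger : interval -> formula A -> formula A -> formula A
| Next : interval -> formula A -> formula A
| Until : interval -> formula A -> formula A -> formula A
| Release : interval -> formula A -> formula A -> formula A.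
Arguments Bot {A}.

Definition Neg A (f : formula A) := Impl f Bot.
Definition Top {A} : formula A := Neg Bot.
Definition Equiv A (f g : formula A) := And (Impl f g) (Impl g f).

Fixpoint sat A (H T : nat -> A -> Prop) (tau : nat -> nat) (lam : natw)
    (k : nat) (f : formula A) {struct f} : Prop :=
  match f with
  | Atom p => H k p
  | Bot => False
  | Impl f g =>
      (sat H T tau lam k f -> sat H T tau lam k g) /\
      (sat T T tau lam k f -> sat T T tau lam k g)
  | And f g => sat H T tau lam k f /\ sat H T tau lam k g
  | Or f g => sat H T tau lam k f \/ sat H T tau lam k g
  | Prev J f => 0 < k /\ sat H T tau lam (k - 1) f /\ in_itv (tau k - tau (k - 1)) J
  | Since J f g => exists j, j <= k /\ in_itv (tau k - tau j) J /\
      sat H T tau lam j g /\ (forall i, j < i <= k -> sat H T tau lam i f)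
  | Trigger J f g => forall j, j <= k -> in_itv (tau k - tau j) J ->
      sat H T tau lam j g \/ (exists i, j < i <= k /\ sat H T tau lam i f)
  | Next J f => ltw (k + 1) lam /\ sat H T tau lam (k + 1) f /\
      in_itv (tau (k + 1) - tau k) J
  | Until J f g => exists j, k <= j /\ ltw j lam /\ in_itv (tau j - tau k) J /\
      sat H T tau lam j g /\ (forall i, k <= i < j -> sat H T tau lam i f)
  | Release J f g => forall j, k <= j -> ltw j lam -> in_itv (tau j - tau k) J ->
      sat H T tau lam j g \/ (exists i, k <= i < j /\ sat H T tau lam i f)
  end.

Record timed_trace (A : Type) := TTrace {
  tr_len : natw;
  tr_H : nat -> A -> Prop;
  tr_T : nat -> A -> Prop;
  tr_tau : nat -> nat;
  tr_HT : forall i p, ltw i tr_len -> tr_H i p -> tr_T i p;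
  tr_tau0 : tr_tau 0 = 0 }.

Definition strict A (M : timed_trace A) : Prop :=
  forall i, ltw (i + 1) (tr_len M) -> tr_tau M i < tr_tau M (i + 1).

Definition msat A (M : timed_trace A) (k : nat) (f : formula A) : Prop :=
  sat (tr_H M) (tr_T M) (tr_tau M) (tr_len M) k f.

Definition mequiv A (f g : formula A) : Prop :=
  forall M : timed_trace A, strict M ->
    forall k, ltw k (tr_len M) -> msat M k (Equiv f g).

(* Unary normal form: intervals only on the (derived) unary operators
   ○_I, ●_I, ◇_I = ⊤ U_I φ, □_I = ⊥ R_I φ, ⧫_I = ⊤ S_I φ, ■_I = ⊥ T_I φ
   (○̂_I, •̂_I are built from ○_I/●_I, ∨, →, ⊥); binary U,R,S,T only with [0,ω). *)
Inductive unf A : formula A -> Prop :=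
| unf_atom p : unf (Atom p)
| unf_bot : unf Bot
| unf_impl f g : unf f -> unf g -> unf (Impl f g)
| unf_and f g : unf f -> unf g -> unf (And f g)
| unf_or f g : unf f -> unf g -> unf (Or f g)
| unf_prev J f : unf f -> unf (Prev J f)
| unf_next J f : unf f -> unf (Next J f)
| unf_since f g : unf f -> unf g -> unf (Since full f g)
| unf_trigger f g : unf f -> unf g -> unf (Trigger full f g)
| unf_until f g : unf f -> unf g -> unf (Until full f g)
| unf_release f g : unf f -> unf g -> unf (Release full f g)
| unf_once J f : unf f -> unf (Since J Top f)
| unf_historically J f : unf f -> unf (Trigger J Bot f)
| unf_eventually J f : unf f -> unf (Until J Top f)
| unf_always J f : unf f -> unf (Release J Bot f).

From Stdlib Require Import Arith Lia Classical.
Set Implicit Arguments.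

(** Each bounded binary operator is unfolded one step along the trace. Since
    time strictly increases, the step to the neighbouring state takes some
    delay [δ ≥ 1]. If [δ ≥ m], every further state already lies beyond the
    lower bound, so [φ U_[m,n) ψ] becomes an unbounded [φ U ψ] at the
    neighbour together with [◇_[m,n) ψ]; if [δ < m], it becomes
    [φ U_[m-δ,n-δ) ψ] at the neighbour, and as only finitely many delays
    [δ < m] exist, a finite disjunction over [○_[δ,δ+1)] covers them all.
    Past operators are the same construction read backwards along the trace,
    and release/trigger are the classical duals of until/since, so one
    argument covers all four binary operators. *)

Lemma ltw_mono (w : natw) i j : i <= j -> ltw j w -> ltw i w.
Proof. destruct w; simpl; auto; lia. Qed.

Definition subw (n : natw) (d : nat) : natw :=
  match n with Some n => Some (n - d) | None => None end.

Definition itv_shift (d : nat) (J : interval) : interval :=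
  Itv (lo J - d) (subw (hi J) d).

Lemma in_itv_shift d x J : in_itv (d + x) J <-> in_itv x (itv_shift d J).
Proof. destruct J as [m [n|]]; unfold in_itv; simpl; lia. Qed.

(* A frame [(V, D)] is the trace seen from a fixed state in one time
   direction: offset [i] is a state iff [V i], at temporal distance [D i].
   [is_shift V D V' D'] says that [(V', D')] is the same frame seen from
   offset 1. *)
Definition until_on (V : nat -> Prop) (D : nat -> nat) (J : interval)
    (P Q : nat -> Prop) : Prop :=
  exists j, V j /\ in_itv (D j) J /\ Q j /\ forall i, i < j -> P i.

Definition release_on (V : nat -> Prop) (D : nat -> nat) (J : interval)
    (P Q : nat -> Prop) : Prop :=
  forall j, V j -> in_itv (D j) J -> Q j \/ exists i, i < j /\ P i.

Record is_frame (V : nat -> Prop) (D : nat -> nat) : Prop := {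
  dist0 : D 0 = 0;
  valid_pred : forall i, V (S i) -> V i;
  dist_lt : forall i, V (S i) -> D i < D (S i) }.

Record is_shift (V : nat -> Prop) (D : nat -> nat)
    (V' : nat -> Prop) (D' : nat -> nat) : Prop := {
  valid_shift : forall i, V' i <-> V (S i);
  dist_shift : forall i, V (S i) -> D (S i) = D 1 + D' i }.

Lemma release_on_not_until V D J P Q :
  release_on V D J P Q <-> ~ until_on V D J (fun i => ~ P i) (fun i => ~ Q i).
Proof.
  unfold release_on, until_on; split.
  - intros HR (j & Vj & Jj & nQj & nP).
    destruct (HR j Vj Jj) as [Qj | (i & ij & Pi)]; [exact (nQj Qj) | exact (nP i ij Pi)].
  - intros nU j Vj Jj.
    destruct (classic (Q j)) as [Qj | nQj]; [now left | right].
    apply NNPP; intros nP; apply nU.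
    exists j; refine (conj Vj (conj Jj (conj nQj _))).
    intros i ij Pi; apply nP; eauto.
Qed.

Lemma release_on_of_always V D J P Q :
  release_on V D J (fun _ => False) Q -> release_on V D J P Q.
Proof. intros HR j Vj Jj; destruct (HR j Vj Jj) as [Qj | (i & _ & [])]; now left. Qed.

Section Frame.
Variables (V : nat -> Prop) (D : nat -> nat).
Hypothesis HF : is_frame V D.

Lemma valid_le i j : i <= j -> V j -> V i.
Proof.
  induction 1 as [|j ij IH]; intros Vj; [exact Vj|].
  exact (IH (valid_pred HF j Vj)).
Qed.

Lemma dist_mono i j : i <= j -> V j -> D i <= D j.
Proof.
  induction 1 as [|j ij IH]; intros Vj; [lia|].
  pose proof (dist_lt HF j Vj); specialize (IH (valid_pred HF j Vj)); lia.
Qed.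

Lemma until_on_iff J P P' Q Q' :
  (forall i, V i -> P i <-> P' i) -> (forall i, V i -> Q i <-> Q' i) ->
  until_on V D J P Q <-> until_on V D J P' Q'.
Proof.
  intros HP HQ; unfold until_on.
  assert (Vlt : forall i j, i < j -> V j -> V i)
    by (intros i j ij; apply valid_le; lia).
  split; intros (j & Vj & Jj & Qj & Pj); exists j;
    refine (conj Vj (conj Jj (conj _ _))); try (apply HQ; assumption);
    intros i ij; apply HP; eauto.
Qed.

Lemma release_on_iff J P P' Q Q' :
  (forall i, V i -> P i <-> P' i) -> (forall i, V i -> Q i <-> Q' i) ->
  release_on V D J P Q <-> release_on V D J P' Q'.
Proof.
  intros HP HQ; rewrite !release_on_not_until.
  enough (until_on V D J (fun i => ~ P i) (fun i => ~ Q i) <->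
          until_on V D J (fun i => ~ P' i) (fun i => ~ Q' i)) by tauto.
  apply until_on_iff; intros i Vi; [rewrite (HP i Vi) | rewrite (HQ i Vi)]; tauto.
Qed.

Lemma until_on_lo0 J P Q : lo J = 0 ->
  until_on V D J P Q <-> until_on V D J (fun _ => True) Q /\ until_on V D full P Q.
Proof.
  destruct J as [m n]; simpl; intros ->; unfold until_on, in_itv, full; simpl; split.
  - intros (j & Vj & (_ & Jj) & Qj & Pj).
    split; exists j; repeat split; auto; lia.
  - intros [(j1 & Vj1 & (_ & Jj1) & Qj1 & _) (j2 & Vj2 & _ & Qj2 & Pj2)].
    destruct (le_lt_dec j2 j1) as [le21 | lt12].
    + exists j2; repeat split; auto; [lia|].
      exact (ltw_mono n (dist_mono le21 Vj1) Jj1).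
    + exists j1; repeat split; auto; [lia|].
      intros i ij1; apply Pj2; lia.
Qed.

Lemma until_on_end J P Q : 0 < lo J -> ~ V 1 -> ~ until_on V D J P Q.
Proof.
  intros Hlo nV1 (j & Vj & (Jj & _) & _).
  destruct j as [|j]; [rewrite (dist0 HF) in Jj; lia|].
  apply nV1, (valid_le (j := S j)); [lia | exact Vj].
Qed.

Lemma release_on_always J Q :
  release_on V D J (fun _ => False) Q <-> ~ until_on V D J (fun _ => True) (fun i => ~ Q i).
Proof.
  rewrite release_on_not_until.
  enough (until_on V D J (fun _ => ~ False) (fun i => ~ Q i) <->
          until_on V D J (fun _ => True) (fun i => ~ Q i)) by tauto.
  apply until_on_iff; tauto.
Qed.

Lemma release_on_lo0 J P Q : lo J = 0 ->
  release_on V D J P Q <-> release_on V D J (fun _ => False) Q \/ release_on V D full P Q.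
Proof.
  intros Hlo; rewrite release_on_always, !release_on_not_until, until_on_lo0 by exact Hlo.
  destruct (classic (until_on V D full (fun i => ~ P i) (fun i => ~ Q i))); tauto.
Qed.

Lemma release_on_end J P Q : 0 < lo J -> ~ V 1 -> release_on V D J P Q.
Proof. intros Hlo nV1; apply release_on_not_until, until_on_end; assumption. Qed.

End Frame.

Section Shift.
Variables (V V' : nat -> Prop) (D D' : nat -> nat).
Hypotheses (HF : is_frame V D) (HS : is_shift V D V' D') (V1 : V 1).

Lemma shift_frame : is_frame V' D'.
Proof.
  split.
  - pose proof (dist_shift HS 0 V1); lia.
  - intros i; rewrite !(valid_shift HS); apply (valid_pred HF).
  - intros i; rewrite (valid_shift HS); intros Vi.
    pose proof (dist_lt HF (S i) Vi).
    rewrite (dist_shift HS _ Vi), (dist_shift HS _ (valid_pred HF _ Vi)) in *; lia.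
Qed.

Lemma until_on_step J P Q : 0 < lo J ->
  until_on V D J P Q <->
  P 0 /\ until_on V' D' (itv_shift (D 1) J) (fun i => P (S i)) (fun i => Q (S i)).
Proof.
  intros Hlo; unfold until_on; split.
  - intros (j & Vj & Jj & Qj & Pj).
    destruct j as [|j]; [rewrite (dist0 HF) in Jj; destruct Jj; lia|].
    split; [apply Pj; lia|].
    exists j; split; [|split; [|split]].
    + apply (valid_shift HS); exact Vj.
    + apply in_itv_shift; rewrite <- (dist_shift HS _ Vj); exact Jj.
    + exact Qj.
    + intros i ij; apply Pj; lia.
  - intros (P0 & j & Vj & Jj & Qj & Pj).
    apply (valid_shift HS) in Vj.
    exists (S j); split; [exact Vj | split; [|split; [exact Qj|]]].
    + rewrite (dist_shift HS _ Vj); apply in_itv_shift; exact Jj.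
    + intros [|i] ij; [exact P0 | apply Pj; lia].
Qed.

Lemma until_on_far J P Q : 0 < lo J <= D 1 ->
  until_on V D J P Q <->
  P 0 /\ until_on V' D' full (fun i => P (S i)) (fun i => Q (S i)) /\
  until_on V D J (fun _ => True) Q.
Proof.
  intros Hlo.
  rewrite !until_on_step, (until_on_lo0 shift_frame) by (simpl; lia).
  tauto.
Qed.

Lemma release_on_step J P Q : 0 < lo J ->
  release_on V D J P Q <->
  P 0 \/ release_on V' D' (itv_shift (D 1) J) (fun i => P (S i)) (fun i => Q (S i)).
Proof.
  intros Hlo; rewrite !release_on_not_until, until_on_step by exact Hlo.
  destruct (classic (P 0)); tauto.
Qed.

Lemma release_on_far J P Q : 0 < lo J <= D 1 ->
  release_on V D J P Q <->
  P 0 \/ release_on V' D' full (fun i => P (S i)) (fun i => Q (S i)) \/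
  release_on V D J (fun _ => False) Q.
Proof.
  intros Hlo; rewrite (release_on_always HF), !release_on_not_until, until_on_far by exact Hlo.
  destruct (classic (P 0)),
    (classic (until_on V' D' full (fun i => ~ P (S i)) (fun i => ~ Q (S i)))); tauto.
Qed.

End Shift.

Inductive dir := Past | Future.

Definition dmove (d : dir) : nat -> nat :=
  match d with Past => pred | Future => S end.

(* Recursion on [i] makes [walk d (walk d k 1) i] and [walk d k (S i)]
   convertible, so the frame at the neighbour is literally the shifted frame. *)
Fixpoint walk (d : dir) (k i : nat) {struct i} : nat :=
  match i with 0 => k | S i => walk d (dmove d k) i end.

Lemma walk_future k i : walk Future k i = k + i.
Proof. revert k; induction i as [|i IH]; intros k; simpl; [lia | rewrite IH; lia]. Qed.

Lemma walk_past k i : walk Past k i = k - i.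
Proof. revert k; induction i as [|i IH]; intros k; simpl; [lia | rewrite IH; lia]. Qed.

Section Translation.
Variable A : Type.

Definition dnext (d : dir) : interval -> formula A -> formula A :=
  match d with Past => @Prev A | Future => @Next A end.

Definition duntil (d : dir) : interval -> formula A -> formula A -> formula A :=
  match d with Past => @Since A | Future => @Until A end.

Definition drelease (d : dir) : interval -> formula A -> formula A -> formula A :=
  match d with Past => @Trigger A | Future => @Release A end.

Fixpoint delay_split (d : dir) (G : nat -> formula A) (m : nat) : formula A :=
  match m with
  | 0 => Bot
  | S m' => Or (dnext d (Itv m (Some (S m))) (G m)) (delay_split d G m')
  end.

(* [fuel] only bounds the recursion: [lo J] strictly decreases along it. *)
Fixpoint until_nf (d : dir) (fuel : nat) (J : interval) (a b : formula A) : formula A :=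
  match fuel, lo J with
  | S fuel, S m =>
      And a (Or (And (dnext d (Itv (lo J) None) (duntil d full a b)) (duntil d J Top b))
                (delay_split d (fun e => until_nf d fuel (itv_shift e J) a b) m))
  | _, _ => And (duntil d J Top b) (duntil d full a b)
  end.

Fixpoint release_nf (d : dir) (fuel : nat) (J : interval) (a b : formula A) : formula A :=
  match fuel, lo J with
  | S fuel, S m =>
      Or a (Or (Neg (dnext d full Top))
            (Or (Or (dnext d (Itv (lo J) None) (drelease d full a b)) (drelease d J Bot b))
                (delay_split d (fun e => release_nf d fuel (itv_shift e J) a b) m)))
  | _, _ => Or (drelease d J Bot b) (drelease d full a b)
  end.

Fixpoint nf (f : formula A) : formula A :=
  match f with
  | Atom p => Atom p
  | Bot => Bot
  | Impl f g => Impl (nf f) (nf g)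
  | And f g => And (nf f) (nf g)
  | Or f g => Or (nf f) (nf g)
  | Prev J f => Prev J (nf f)
  | Next J f => Next J (nf f)
  | Since J f g => until_nf Past (lo J) J (nf f) (nf g)
  | Until J f g => until_nf Future (lo J) J (nf f) (nf g)
  | Trigger J f g => release_nf Past (lo J) J (nf f) (nf g)
  | Release J f g => release_nf Future (lo J) J (nf f) (nf g)
  end.

Lemma unf_top : unf (@Top A).
Proof. repeat constructor. Qed.

Lemma unf_dnext d J f : unf f -> unf (dnext d J f).
Proof. destruct d; constructor; assumption. Qed.

Lemma unf_delay_split d G m : (forall e, unf (G e)) -> unf (delay_split d G m).
Proof. intros HG; induction m; simpl; constructor; auto using unf_dnext. Qed.

Lemma unf_duntil_full d a b : unf a -> unf b -> unf (duntil d full a b).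
Proof. destruct d; constructor; assumption. Qed.

Lemma unf_duntil_top d J b : unf b -> unf (duntil d J Top b).
Proof. destruct d; constructor; assumption. Qed.

Lemma unf_drelease_full d a b : unf a -> unf b -> unf (drelease d full a b).
Proof. destruct d; constructor; assumption. Qed.

Lemma unf_drelease_bot d J b : unf b -> unf (drelease d J Bot b).
Proof. destruct d; constructor; assumption. Qed.

Local Hint Resolve unf_top unf_delay_split unf_dnext unf_duntil_full unf_duntil_top
  unf_drelease_full unf_drelease_bot : core.
Local Hint Constructors unf : core.

Lemma unf_until_nf d fuel J a b : unf a -> unf b -> unf (until_nf d fuel J a b).
Proof.
  revert J; induction fuel as [|fuel IH]; intros [[|m] n] Ha Hb; simpl; auto 7.
Qed.

Lemma unf_release_nf d fuel J a b : unf a -> unf b -> unf (release_nf d fuel J a b).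
Proof.
  revert J; induction fuel as [|fuel IH]; intros [[|m] n] Ha Hb; simpl; unfold Neg; auto 10.
Qed.

Lemma unf_nf f : unf (nf f).
Proof. induction f; simpl; auto using unf_until_nf, unf_release_nf. Qed.

Section Semantics.
Variables (HH TT : nat -> A -> Prop) (tau : nat -> nat) (lam : natw).
Hypothesis strict : forall i, ltw (i + 1) lam -> tau i < tau (i + 1).
Notation sat' := (sat HH TT tau lam).

Lemma tau_lt i : ltw (S i) lam -> tau i < tau (S i).
Proof. rewrite <- Nat.add_1_r; apply strict. Qed.

Lemma tau_mono i j : i <= j -> ltw j lam -> tau i <= tau j.
Proof.
  induction 1 as [|j ij IH]; intros Hj; [lia|].
  pose proof (tau_lt j Hj); pose proof (IH (ltw_mono lam (Nat.le_succ_diag_r j) Hj)); lia.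
Qed.

Definition fvalid (d : dir) (k i : nat) : Prop :=
  match d with Past => i <= k | Future => ltw (walk Future k i) lam end.

Definition fdist (d : dir) (k i : nat) : nat :=
  match d with
  | Past => tau k - tau (walk Past k i)
  | Future => tau (walk Future k i) - tau k
  end.

Lemma walk_valid d k i : ltw k lam -> fvalid d k i -> ltw (walk d k i) lam.
Proof.
  destruct d; simpl; intros Hk Hi; [|exact Hi].
  rewrite walk_past; apply ltw_mono with k; [lia | exact Hk].
Qed.

Lemma frame_is_frame d k : ltw k lam -> is_frame (fvalid d k) (fdist d k).
Proof.
  intros Hk; destruct d; split; unfold fvalid, fdist.
  - simpl; lia.
  - lia.
  - intros i Hi; rewrite !walk_past.
    pose proof (tau_lt (k - S i) ltac:(apply ltw_mono with k; [lia | exact Hk])).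
    replace (S (k - S i)) with (k - i) in * by lia.
    pose proof (@tau_mono (k - i) k ltac:(lia) Hk); lia.
  - simpl; lia.
  - intros i; rewrite !walk_future; apply ltw_mono; lia.
  - intros i; rewrite !walk_future, <- plus_n_Sm; intros Hi.
    pose proof (tau_lt (k + i) Hi).
    pose proof (@tau_mono k (k + i) ltac:(lia) (ltw_mono lam (Nat.le_succ_diag_r _) Hi)); lia.
Qed.

Lemma frame_is_shift d k : ltw k lam -> fvalid d k 1 ->
  is_shift (fvalid d k) (fdist d k) (fvalid d (walk d k 1)) (fdist d (walk d k 1)).
Proof.
  intros Hk; destruct d; unfold fvalid, fdist; simpl; intros Hk1; split; intros i.
  - lia.
  - intros Hi; rewrite !walk_past, <- ?Nat.sub_1_r.
    replace (k - S i) with (k - 1 - i) by lia.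
    pose proof (@tau_mono (k - 1 - i) (k - 1) ltac:(lia) (ltw_mono lam (Nat.le_sub_l k 1) Hk)).
    pose proof (@tau_mono (k - 1) k ltac:(lia) Hk); lia.
  - reflexivity.
  - cbn [walk dmove]; intros Hi.
    assert (Hle : S k <= walk Future (S k) i) by (rewrite walk_future; lia).
    pose proof (tau_mono Hle Hi); pose proof (tau_lt k Hk1); lia.
Qed.

Lemma sat_dnext d J f k :
  sat' k (dnext d J f) <-> fvalid d k 1 /\ in_itv (fdist d k 1) J /\ sat' (walk d k 1) f.
Proof. destruct d; simpl; [rewrite Nat.sub_1_r | rewrite Nat.add_1_r]; tauto. Qed.

Lemma sat_duntil d J a b k :
  sat' k (duntil d J a b) <->
  until_on (fvalid d k) (fdist d k) J
    (fun i => sat' (walk d k i) a) (fun i => sat' (walk d k i) b).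
Proof.
  unfold until_on, fvalid, fdist; destruct d; simpl;
    setoid_rewrite walk_past || setoid_rewrite walk_future; split.
  - intros (j & jk & Jj & Bj & Aj); exists (k - j).
    replace (k - (k - j)) with j by lia.
    refine (conj _ (conj Jj (conj Bj _))); [lia|].
    intros i ij; apply Aj; lia.
  - intros (j & jk & Jj & Bj & Aj); exists (k - j).
    refine (conj _ (conj Jj (conj Bj _))); [lia|].
    intros i ij; replace i with (k - (k - i)) by lia; apply Aj; lia.
  - intros (j & kj & jl & Jj & Bj & Aj); exists (j - k).
    replace (k + (j - k)) with j by lia.
    refine (conj jl (conj Jj (conj Bj _))).
    intros i ij; apply Aj; lia.
  - intros (j & jl & Jj & Bj & Aj); exists (k + j).
    refine (conj _ (conj jl (conj Jj (conj Bj _)))); [lia|].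
    intros i ij; replace i with (k + (i - k)) by lia; apply Aj; lia.
Qed.

Lemma sat_drelease d J a b k :
  sat' k (drelease d J a b) <->
  release_on (fvalid d k) (fdist d k) J
    (fun i => sat' (walk d k i) a) (fun i => sat' (walk d k i) b).
Proof.
  unfold release_on, fvalid, fdist; destruct d; simpl;
    setoid_rewrite walk_past || setoid_rewrite walk_future; split.
  - intros HT j jk Jj.
    destruct (HT (k - j) ltac:(lia) Jj) as [Bj | (i & ij & Ai)]; [now left | right].
    exists (k - i); split; [lia|]; replace (k - (k - i)) with i by lia; exact Ai.
  - intros HT j jk Jj.
    replace j with (k - (k - j)) in Jj |- * by lia.
    destruct (HT (k - j) ltac:(lia) Jj) as [Bj | (i & ij & Ai)]; [now left | right].
    exists (k - i); split; [lia | exact Ai].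
  - intros HR j jl Jj.
    destruct (HR (k + j) ltac:(lia) jl Jj) as [Bj | (i & ij & Ai)]; [now left | right].
    exists (i - k); split; [lia|]; replace (k + (i - k)) with i by lia; exact Ai.
  - intros HR j kj jl Jj.
    replace j with (k + (j - k)) in jl, Jj |- * by lia.
    destruct (HR (j - k) jl Jj) as [Bj | (i & ij & Ai)]; [now left | right].
    exists (k + i); split; [lia | exact Ai].
Qed.

Lemma sat_delay_split d G m k :
  sat' k (delay_split d G m) <->
  fvalid d k 1 /\ 1 <= fdist d k 1 <= m /\ sat' (walk d k 1) (G (fdist d k 1)).
Proof.
  induction m as [|m IH]; cbn [delay_split sat].
  - split; [tauto | intros (_ & Hm & _); lia].
  - rewrite sat_dnext, IH; unfold in_itv; cbn [lo hi ltw]; split.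
    + intros [(V1 & Hd & H) | (V1 & Hd & H)]; (split; [exact V1 | split; [lia|]]); [|exact H].
      replace (fdist d k 1) with (S m) by lia; exact H.
    + intros (V1 & Hd & H).
      destruct (Nat.eq_dec (fdist d k 1) (S m)) as [E | E]; [left; rewrite E in * | right];
        (split; [exact V1 | split; [lia | exact H]]).
Qed.

Lemma sat_duntil_top d J b k :
  sat' k (duntil d J Top b) <->
  until_on (fvalid d k) (fdist d k) J (fun _ => True) (fun i => sat' (walk d k i) b).
Proof.
  rewrite sat_duntil; unfold until_on; split;
    intros (j & Vj & Jj & Bj & _); exists j; refine (conj Vj (conj Jj (conj Bj _)));
    intros; simpl; tauto.
Qed.

Lemma sat_not_dnext_top d k : sat' k (Neg (dnext d full Top)) <-> ~ fvalid d k 1.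
Proof.
  assert (Hfull : forall x, in_itv x full) by (intros x; split; [apply Nat.le_0_l | exact I]).
  destruct d; cbn; rewrite ?Nat.add_1_r; unfold lt; firstorder.
Qed.

Lemma sat_duntil_split d J a b k : ltw k lam -> lo J = 0 ->
  sat' k (duntil d J a b) <-> sat' k (duntil d J Top b) /\ sat' k (duntil d full a b).
Proof.
  intros Hk Hlo; rewrite sat_duntil_top, !sat_duntil.
  exact (until_on_lo0 (frame_is_frame d k Hk) _ _ _ Hlo).
Qed.

Lemma sat_drelease_split d J a b k : ltw k lam -> lo J = 0 ->
  sat' k (drelease d J a b) <-> sat' k (drelease d J Bot b) \/ sat' k (drelease d full a b).
Proof.
  intros Hk Hlo; rewrite !sat_drelease.
  exact (release_on_lo0 (frame_is_frame d k Hk) _ _ _ Hlo).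
Qed.

Lemma dist1_pos d k : ltw k lam -> fvalid d k 1 -> 1 <= fdist d k 1.
Proof.
  intros Hk V1; pose proof (frame_is_frame d k Hk) as HF.
  pose proof (dist_lt HF 0 V1); rewrite (dist0 HF) in *; lia.
Qed.

Lemma sat_until_nf d fuel : forall J a b k, lo J <= fuel -> ltw k lam ->
  sat' k (until_nf d fuel J a b) <-> sat' k (duntil d J a b).
Proof.
  induction fuel as [|fuel IH]; intros [[|m] n] a b k Hm Hk; cbn [lo] in Hm;
    try (cbn [until_nf lo sat]; symmetry; apply sat_duntil_split; [exact Hk | reflexivity]);
    [lia|].
  cbn [until_nf lo sat]; rewrite sat_dnext, sat_delay_split, sat_duntil_top, !sat_duntil.
  pose proof (frame_is_frame d k Hk) as HF.
  destruct (classic (fvalid d k 1)) as [V1 | nV1].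
  2:{ split; [tauto | intros HU; contradict HU; apply (until_on_end HF); [cbn; lia | exact nV1]]. }
  pose proof (frame_is_shift d k Hk V1) as HS; pose proof (dist1_pos d k Hk V1) as Hpos.
  unfold in_itv; cbn [lo hi ltw].
  destruct (le_lt_dec (S m) (fdist d k 1)) as [far | near].
  - rewrite (until_on_far HF HS V1 _ (fun i => sat' (walk d k i) a)) by (cbn; lia).
    intuition lia.
  - rewrite (until_on_step HF HS _ (fun i => sat' (walk d k i) a)) by (cbn; lia).
    rewrite IH, sat_duntil by (cbn [lo itv_shift]; lia || exact (walk_valid d k 1 Hk V1)).
    intuition lia.
Qed.

Lemma sat_release_nf d fuel : forall J a b k, lo J <= fuel -> ltw k lam ->
  sat' k (release_nf d fuel J a b) <-> sat' k (drelease d J a b).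
Proof.
  induction fuel as [|fuel IH]; intros [[|m] n] a b k Hm Hk; cbn [lo] in Hm;
    try (cbn [release_nf lo sat]; symmetry; apply sat_drelease_split; [exact Hk | reflexivity]);
    [lia|].
  cbn [release_nf lo sat].
  rewrite sat_not_dnext_top, sat_dnext, sat_delay_split, !sat_drelease.
  pose proof (frame_is_frame d k Hk) as HF.
  destruct (classic (fvalid d k 1)) as [V1 | nV1].
  2:{ split; [intros _; apply (release_on_end HF); [cbn; lia | exact nV1] | tauto]. }
  pose proof (frame_is_shift d k Hk V1) as HS; pose proof (dist1_pos d k Hk V1) as Hpos.
  unfold in_itv; cbn [lo hi ltw].
  destruct (le_lt_dec (S m) (fdist d k 1)) as [far | near].
  - rewrite (release_on_far HF HS V1 _ (fun i => sat' (walk d k i) a)) by (cbn; lia).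
    intuition lia.
  - pose proof (release_on_step HF HS (Itv (S m) n) (fun i => sat' (walk d k i) a)
                  (fun i => sat' (walk d k i) b) ltac:(cbn; lia)) as Hstep.
    pose proof (@release_on_of_always (fvalid d k) (fdist d k) (Itv (S m) n)
                  (fun i => sat' (walk d k i) a) (fun i => sat' (walk d k i) b)) as Hbot.
    rewrite Hstep in *.
    rewrite IH, sat_drelease by (cbn [lo itv_shift]; lia || exact (walk_valid d k 1 Hk V1)).
    intuition lia.
Qed.

Section Congruence.
Variables (k : nat) (Hk : ltw k lam).

Lemma sat_dnext_congr d J f g :
  (forall k', ltw k' lam -> sat' k' f <-> sat' k' g) ->
  sat' k (dnext d J f) <-> sat' k (dnext d J g).
Proof.
  intros Hfg; rewrite !sat_dnext.
  split; intros (V1 & J1 & H1); (split; [exact V1 | split; [exact J1|]]);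
    apply (Hfg _ (walk_valid d k 1 Hk V1)), H1.
Qed.

Lemma sat_duntil_congr d J a a' b b' :
  (forall k', ltw k' lam -> sat' k' a <-> sat' k' a') ->
  (forall k', ltw k' lam -> sat' k' b <-> sat' k' b') ->
  sat' k (duntil d J a b) <-> sat' k (duntil d J a' b').
Proof.
  intros Ha Hb; rewrite !sat_duntil.
  apply (until_on_iff (frame_is_frame d k Hk)); intros i Vi;
    [apply Ha | apply Hb]; exact (walk_valid d k i Hk Vi).
Qed.

Lemma sat_drelease_congr d J a a' b b' :
  (forall k', ltw k' lam -> sat' k' a <-> sat' k' a') ->
  (forall k', ltw k' lam -> sat' k' b <-> sat' k' b') ->
  sat' k (drelease d J a b) <-> sat' k (drelease d J a' b').
Proof.
  intros Ha Hb; rewrite !sat_drelease.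
  apply (release_on_iff (frame_is_frame d k Hk)); intros i Vi;
    [apply Ha | apply Hb]; exact (walk_valid d k i Hk Vi).
Qed.

End Congruence.
End Semantics.

Lemma sat_nf f HH TT tau lam :
  (forall i, ltw (i + 1) lam -> tau i < tau (i + 1)) ->
  forall k, ltw k lam -> sat HH TT tau lam k f <-> sat HH TT tau lam k (nf f).
Proof.
  revert HH TT; induction f as [p | | f IHf g IHg | f IHf g IHg | f IHf g IHg
    | J f IHf | J f IHf g IHg | J f IHf g IHg | J f IHf | J f IHf g IHg | J f IHf g IHg];
    intros HH TT Hs k Hk; cbn [nf].
  - reflexivity.
  - reflexivity.
  - cbn [sat]; rewrite (IHf HH TT Hs k Hk), (IHg HH TT Hs k Hk),
      (IHf TT TT Hs k Hk), (IHg TT TT Hs k Hk); reflexivity.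
  - cbn [sat]; rewrite (IHf HH TT Hs k Hk), (IHg HH TT Hs k Hk); reflexivity.
  - cbn [sat]; rewrite (IHf HH TT Hs k Hk), (IHg HH TT Hs k Hk); reflexivity.
  - apply sat_dnext_congr with (d := Past); auto.
  - rewrite sat_until_nf by auto.
    apply sat_duntil_congr with (d := Past); auto.
  - rewrite sat_release_nf by auto.
    apply sat_drelease_congr with (d := Past); auto.
  - apply sat_dnext_congr with (d := Future); auto.
  - rewrite sat_until_nf by auto.
    apply sat_duntil_congr with (d := Future); auto.
  - rewrite sat_release_nf by auto.
    apply sat_drelease_congr with (d := Future); auto.
Qed.

End Translation.

Theorem corollary4 (A : Type) (f : formula A) :
  exists g : formula A, unf g /\ mequiv f g.
Proof.
  exists (nf f); split; [apply unf_nf|].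
  intros M HM k Hk; unfold msat, Equiv; cbn [sat].
  rewrite <- (sat_nf f (tr_H M) (tr_T M) _ _ HM k Hk), <- (sat_nf f (tr_T M) (tr_T M) _ _ HM k Hk).
  tauto.
Qed.
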